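(* Let $c,\rho\in(0,1)$ with $c+\rho>1$. Suppose the conditional gradient algorithm chooses $\theta_k\in[0,1]$ with $\rho\hat\theta_k\le\theta_k\le\hat\theta_k$, where $\hat\theta_k=\max\{\theta\in[0,1]:(1-\theta)\mathrm{gap}(x_k,g_k)+\mathcal D(x_k,s_k,\theta)\le(1-c\theta)\mathrm{gap}(x_k,g_k)\}$. Suppose $q>1$, $r\in[0,1]$ are such that $(\mathcal D,\mathrm{gap},\mathrm{subopt})$ satisfies the $(q,r)$ weak growth property with some finite $M>0$. Then for $k=0,1,\dots$ \[ \mathrm{subopt}_{k+1}\le\mathrm{subopt}_k\Big(1-(c+\rho-1)\min\Big\{1,\Big(\tfrac{q(1-c)}{M}\mathrm{subopt}_k^{1-r}\Big)^{\frac1{q-1}}\Big\}\Big). \] If $r=1$ then $\mathrm{subopt}_k\le\mathrm{subopt}_0\big(1-(c+\rho-1)\min\{1,(q(1-c)/M)^{1/(q-1)}\}\big)^k$. If $r\in[0,1)$ then $\mathrm{subopt}_k\le\mathrm{subopt}_0(1-(c+\rho-1))^k$ for $k=0,\dots,k_0$, where $k_0$ is the smallest $k$ with $\mathrm{subopt}_k^{1-r}\le\frac{M}{q(1-c)}$, and for $k\ge k_0$ \[ \mathrm{subopt}_k\le\Big(\mathrm{subopt}_{k_0}^{\frac{r-1}{q-1}}+\frac{(1-r)(c+\rho-1)}{q-1}\Big(\frac{q(1-c)}{M}\Big)^{\frac1{q-1}}(k-k_0)\Big)^{\frac{q-1}{r-1}}. \]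
   Context: Let $f,\Psi:\mathbb{R}^n\to\mathbb{R}\cup\{\infty\}$ be closed proper convex functions such that (A1) $f$ is differentiable on $\mathrm{dom}(\Psi)$, and (A2) for every $x\in\mathrm{dom}(f)$ the set $\arg\min_s\{\langle\nabla f(x),s\rangle+\Psi(s)\}$ is nonempty. $f^*,\Psi^*$ denote convex conjugates; $\arg\min_y\{\langle g,y\rangle+\Psi(y)\}=\partial\Psi^*(-g)$. $D_f(y,x)=f(y)-f(x)-\langle\nabla f(x),y-x\rangle$. $\mathrm{gap}(x,u)=f(x)+\Psi(x)+f^*(u)+\Psi^*(-u)$. $\mathcal{D}(x,s,\theta)=D_f(x+\theta(s-x),x)+\Psi(x+\theta(s-x))-(1-\theta)\Psi(x)-\theta\Psi(s)$. Suboptimality gap: $\mathrm{subopt}(x)=f(x)+\Psi(x)-\min_y\{f(y)+\Psi(y)\}$ for $x\in\mathrm{dom}(\Psi)$ (the minimum assumed attained/finite). Conditional gradient algorithm: given $x_0\in\mathrm{dom}(\Psi)$, for $k=0,1,2,\dots$ let $g_k=\nabla f(x_k)$, pick $s_k\in\arg\min_y\{\langle g_k,y\rangle+\Psi(y)\}$ and $\theta_k\in[0,1]$, and set $x_{k+1}=(1-\theta_k)x_k+\theta_k s_k$. $\mathrm{subopt}_k=\mathrm{subopt}(x_k)$. $(q,r)$ weak growth property ($q>1$, $r\in[0,1]$): there is a finite $M>0$ such that for all $x\in\mathrm{dom}(\Psi)$, $g=\nabla f(x)$, $s\in\partial\Psi^*(-g)$: $\mathcal D(x,s,\theta)\,\mathrm{subopt}(x)^{1-r}\le\frac{M\theta^q}{q}\mathrm{gap}(x,g)$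 for all $\theta\in[0,1]$. *)

From HB Require Import structures.
From mathcomp Require Import all_boot all_order all_algebra.
From mathcomp Require Import all_classical all_reals.
From mathcomp Require Import ereal topology normedtype derive sequences exp.
Set Implicit Arguments. Unset Strict Implicit. Unset Printing Implicit Defensive.
Import Order.TTheory GRing.Theory Num.Theory.
Import numFieldNormedType.Exports.
Local Open Scope classical_set_scope.
Local Open Scope ring_scope.

Section Defs.
Variables (R : realType) (n : nat).
Notation V := 'rV[R]_n.

Definition dot (u v : V) : R := \sum_(i < n) u ord0 i * v ord0 i.

Definition dom (h : V -> \bar R) : set V := [set x | (h x < +oo)%E].

Definition proper_fun (h : V -> \bar R) : Prop :=
  (forall x, h x != -oo%E) /\ (exists x, h x \is a fin_num).

(* convexity of an extended-valued function (convention 0 * (+oo) = 0) *)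
Definition convex_fun (h : V -> \bar R) : Prop :=
  forall (x y : V) (t : R), 0 <= t <= 1 ->
    (h (t *: x + (1 - t) *: y)%R <= t%:E * h x + (1 - t)%R%:E * h y)%E.

(* closed = lower semicontinuous = all sublevel sets closed *)
Definition closed_fun (h : V -> \bar R) : Prop :=
  forall a : R, closed [set x | (h x <= a%:E)%E].

Definition closed_proper_convex (h : V -> \bar R) : Prop :=
  [/\ closed_fun h, proper_fun h & convex_fun h].

Definition has_gradient (h : V -> \bar R) (x g : V) : Prop :=
  [/\ \forall y \near x, h y \is a fin_num,
      differentiable (fine \o h) x
    & forall v : V, 'd (fine \o h) x v = dot g v].

Definition conjugate (h : V -> \bar R) (u : V) : \bar R :=
  ereal_sup (range (fun x : V => ((dot u x)%:E - h x)%E)).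

Definition subdiff (h : V -> \bar R) (u : V) : set V :=
  [set s | h u \is a fin_num /\
           forall v : V, (h u + (dot s (v - u)%R)%:E <= h v)%E].

Definition argmin_lin (Psi : V -> \bar R) (g : V) : set V :=
  [set s | forall y : V, ((dot g s)%:E + Psi s <= (dot g y)%:E + Psi y)%E].

Definition bregman (gradf : V -> V) (f : V -> \bar R) (y x : V) : \bar R :=
  (f y - f x - (dot (gradf x) (y - x)%R)%:E)%E.

Definition gap (f Psi : V -> \bar R) (x u : V) : \bar R :=
  (f x + Psi x + conjugate f u + conjugate Psi (- u)%R)%E.

Definition Dcal (gradf : V -> V) (f Psi : V -> \bar R) (x s : V) (t : R) : \bar R :=
  (bregman gradf f (x + t *: (s - x))%R x + Psi (x + t *: (s - x))%R
     - (1 - t)%R%:E * Psi x - t%:E * Psi s)%E.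

(* subopt(x) = f(x) + Psi(x) - min_y (f(y) + Psi(y)), as a real number
   (finite for x in dom Psi when the minimum is attained and finite) *)
Definition subopt (f Psi : V -> \bar R) (x : V) : R :=
  fine (f x + Psi x - ereal_inf (range (fun y => f y + Psi y)))%E.

Definition theta_hat (gradf : V -> V) (f Psi : V -> \bar R) (c : R) (x s : V) : R :=
  sup [set t : R | 0 <= t <= 1 /\
        ((1 - t)%R%:E * gap f Psi x (gradf x) + Dcal gradf f Psi x s t
           <= (1 - c * t)%R%:E * gap f Psi x (gradf x))%E].

Definition weak_growth (gradf : V -> V) (f Psi : V -> \bar R) (q r M : R) : Prop :=
  forall x : V, dom Psi x ->
  forall s : V, subdiff (conjugate Psi) (- gradf x)%R s ->
  forall t : R, 0 <= t <= 1 ->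
    (Dcal gradf f Psi x s t * (subopt f Psi x `^ (1 - r))%R%:E
       <= (M * t `^ q / q)%R%:E * gap f Psi x (gradf x))%E.

End Defs.

(* Since [s_k] minimizes the linearization at [x_k], the Frank-Wolfe gap
   [G = gap(x_k, g_k)] dominates [subopt_k], and a step of length [theta]
   changes [subopt] by [- theta G + D(x_k, s_k, theta)].  The function
   [t |-> D(x_k, s_k, t)] is convex and vanishes at 0, so the steps admitted in
   the definition of hat theta form an interval [[0, hat theta]] containing its
   right end (by lower semicontinuity of [Psi]), and by the weak growth property
   it contains [m = min {1, (q (1 - c) / M subopt_k^(1-r))^(1/(q-1))}].  Hence
   [subopt_(k+1) <= subopt_k - c rho m G <= (1 - (c + rho - 1) m) subopt_k].
   Iterating gives a geometric rate while [m = 1] (always when [r = 1]); past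
   the threshold the recursion [a' <= a (1 - g a^p)], [p = (1 - r)/(q - 1)],
   makes [a^(-p)] grow by at least [p g] per step, by Bernoulli's inequality. *)

From HB Require Import structures.
From mathcomp Require Import all_boot all_order all_algebra.
From mathcomp Require Import all_classical all_reals.
From mathcomp Require Import ereal topology normedtype derive sequences exp.
From mathcomp Require Import ring lra.
Import Order.TTheory GRing.Theory Num.Theory.
Import numFieldNormedType.Exports.
Local Open Scope classical_set_scope.
Local Open Scope ring_scope.
Set Implicit Arguments. Unset Strict Implicit.

Section Feasible.
Variables (R : realType) (phi : R -> R) (K : R).
Hypotheses (phi0 : phi 0 = 0)
  (phi_star : forall t l, 0 <= t <= 1 -> 0 <= l <= 1 -> phi (l * t) <= l * phi t)
  (phi_left_closed : forall T, 0 < T <= 1 ->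
     (forall t, 0 <= t < T -> phi t <= K * t) -> phi T <= K * T).

Definition feasible := [set t : R | 0 <= t <= 1 /\ phi t <= K * t].

Lemma feasible0 : feasible 0.
Proof. by split; rewrite ?lexx ?ler01 ?phi0 ?mulr0. Qed.

Lemma feasible_star t u : 0 <= u <= t -> feasible t -> feasible u.
Proof.
move=> /andP[u0 ut] [/andP[t0 t1] ht].
have [t0e|tn0] := eqVneq t 0.
  have -> : u = 0 by apply/eqP; rewrite eq_le u0 -t0e ut.
  exact: feasible0.
have tp : 0 < t by rewrite lt_neqAle eq_sym tn0.
have hl : 0 <= u / t <= 1 by rewrite divr_ge0 ?ler_pdivrMr ?mul1r.
split; first by rewrite u0 (le_trans ut t1).
have -> : u = u / t * t by rewrite mulfVK // gt_eqF.
have t01 : 0 <= t <= 1 by rewrite t0 t1.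
apply: le_trans (phi_star t01 hl) _.
by rewrite mulrCA; apply: ler_wpM2l; first by case/andP: hl.
Qed.

Lemma has_sup_feasible : has_sup feasible.
Proof. by split; [exists 0; apply: feasible0 | exists 1 => t [/andP[_ ?] _]]. Qed.

Lemma feasible_sup : feasible (sup feasible).
Proof.
have T0 : 0 <= sup feasible by apply: ub_le_sup; [case: has_sup_feasible | apply: feasible0].
have T1 : sup feasible <= 1 by apply: ge_sup; [exists 0; apply: feasible0 | move=> t [/andP[]]].
split; first by rewrite T0 T1.
have [->|Tn0] := eqVneq (sup feasible) 0; first by rewrite phi0 mulr0.
apply: phi_left_closed; first by rewrite lt_neqAle eq_sym Tn0 T0 T1.
move=> t /andP[t0 tT].
have eps : 0 < sup feasible - t by rewrite subr_gt0.
have [e [e01 he] lte] := sup_adherent eps has_sup_feasible.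
rewrite opprB addrC subrK in lte.
have ute : 0 <= t <= e by rewrite t0 ltW.
by have [] := feasible_star ute (conj e01 he).
Qed.

End Feasible.

Section Descent.
Variables (R : realType) (c rho q r M : R).
Hypotheses (hc : 0 < c < 1) (hrho : 0 < rho < 1) (hq : 1 < q) (hM : 0 < M).

Definition step_size (a : R) : R :=
  Num.min 1 ((q * (1 - c) / M * a `^ (1 - r)) `^ (1 / (q - 1))).

Lemma step_size_ge0 a : 0 <= step_size a.
Proof. by rewrite le_min ler01 powR_ge0. Qed.

Lemma step_size_le1 a : step_size a <= 1.
Proof. by rewrite ge_min lexx. Qed.

(* [step_size a] is where [M t^q / q * G] meets [(1 - c) t G a^(1 - r)], capped at 1. *)
Lemma step_size_feasible (phi : R -> R) (a G : R) :
  phi 0 = 0 -> 0 <= G ->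
  (forall t, 0 <= t <= 1 -> phi t * a `^ (1 - r) <= M * t `^ q / q * G) ->
  feasible phi ((1 - c) * G) (step_size a).
Proof.
move=> phi0 G0 hgrowth; set m := step_size a; set A := a `^ (1 - r).
have m01 : 0 <= m <= 1 by rewrite step_size_ge0 step_size_le1.
split=> //.
have hq1 : 0 < q - 1 by rewrite subr_gt0.
have qp : 0 < q by apply: lt_trans hq.
have [A0|An0] := eqVneq A 0.
  suff -> : m = 0 by rewrite phi0 !mulr0.
  rewrite /m /step_size -/A A0 mulr0 powR0 ?div1r ?invr_eq0 ?gt_eqF //.
  exact/min_idPr.
have Ap : 0 < A by rewrite lt_neqAle eq_sym An0 powR_ge0.
have mq : m `^ (q - 1) <= q * (1 - c) / M * A.
  have hw : m <= (q * (1 - c) / M * A) `^ (1 / (q - 1)) by rewrite ge_min lexx orbT.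
  apply: le_trans (ge0_ler_powR (ltW hq1) _ _ hw) _; rewrite ?nnegrE ?powR_ge0 //;
    first by case/andP: m01.
  have CA0 : 0 <= q * (1 - c) / M * A.
    by case/andP: hc => _ c1; rewrite !mulr_ge0 ?invr_ge0 ?subr_ge0 ?ltW.
  by rewrite -powRrM mul1r mulVf ?gt_eqF // powRr1.
have mqe : m `^ q = m `^ (q - 1) * m.
  rewrite -[in LHS](subrK 1 q) (@powRD _ m (q - 1) 1); last by rewrite subrK (gt_eqF qp).
  by rewrite powRr1 //; case/andP: m01.
have gm := hgrowth m m01; rewrite mqe in gm.
rewrite -(ler_pM2r Ap); apply: le_trans gm _.
have -> : (1 - c) * G * m * A = M * (q * (1 - c) / M * A * m) / q * G.
  by field; rewrite !gt_eqF.
apply: ler_wpM2r => //; apply: ler_wpM2r; first by rewrite invr_ge0 ltW.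
by apply: ler_wpM2l; [exact: ltW | apply: ler_wpM2r; case/andP: m01].
Qed.

(* [theta] is at least [rho] times a step [T] that is feasible and at least
   [step_size a]; the remaining loss is absorbed by [(1 - c)(1 - rho) >= 0]. *)
Lemma descent_step (phi : R -> R) (a G th : R) :
  phi 0 = 0 ->
  (forall t l, 0 <= t <= 1 -> 0 <= l <= 1 -> phi (l * t) <= l * phi t) ->
  (forall T, 0 < T <= 1 -> (forall t, 0 <= t < T -> phi t <= (1 - c) * G * t) ->
     phi T <= (1 - c) * G * T) ->
  (forall t, 0 <= t <= 1 -> phi t * a `^ (1 - r) <= M * t `^ q / q * G) ->
  0 <= a <= G ->
  rho * sup (feasible phi ((1 - c) * G)) <= th <= sup (feasible phi ((1 - c) * G)) ->
  a - th * G + phi th <= a * (1 - (c + rho - 1) * step_size a).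
Proof.
move=> phi0 phi_star phi_closed hgrowth /andP[a0 aG] /andP[thl thr].
have G0 : 0 <= G by apply: le_trans aG.
set T := sup _ in thl thr.
have FT : feasible phi ((1 - c) * G) T by apply: feasible_sup.
have [/andP[T0 _] _] := FT.
have th0 : 0 <= th by apply: le_trans thl; rewrite mulr_ge0 //; case/andP: hrho => /ltW.
have th_le_T : 0 <= th <= T by rewrite th0 thr.
have [_ Fth] := feasible_star phi0 phi_star th_le_T FT.
have mT : step_size a <= T.
  apply: ub_le_sup; first by case: (has_sup_feasible ((1 - c) * G) phi0).
  exact: step_size_feasible.
have m0 := step_size_ge0 a.
case/andP: hc => c0 c1; case/andP: hrho => r0 r1.
have h1 : c * (rho * T) * G <= c * th * G by rewrite ler_wpM2r // ler_wpM2l // ltW.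
have h2 : c * rho * step_size a * a <= c * (rho * T) * G.
  rewrite mulrA; apply: ler_pM => //; first by rewrite !mulr_ge0 // ltW.
  by rewrite ler_wpM2l // mulr_ge0 // ltW.
have h3 : (c + rho - 1) * step_size a * a <= c * rho * step_size a * a.
  by rewrite ler_wpM2r // ler_wpM2r //; nra.
nra.
Qed.

End Descent.

Section PowerBounds.
Variable R : realType.

Lemma bernoulli_powRN (u p : R) : 0 <= u < 1 -> 0 < p -> 1 + p * u <= (1 - u) `^ (- p).
Proof.
move=> /andP[u0 u1] p0.
rewrite /powR gt_eqF ?subr_gt0 //.
apply: le_trans (expR_ge1Dx (p * u)) _; rewrite ler_expR mulNr -mulrN.
have hln : ln (1 + - u) <= - u by apply: le_ln1Dx; rewrite ltrN2.
rewrite ler_wpM2l //; first exact: ltW.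
by rewrite lerNr.
Qed.

Lemma powRN_contraction (a a' u p : R) : 0 < a' -> a' <= a * (1 - u) -> 0 <= u < 1 ->
  0 < p -> a `^ (- p) * (1 + p * u) <= a' `^ (- p).
Proof.
move=> a'0 ha u01 p0; have /andP[u0 u1] := u01.
have hu : 0 < 1 - u by rewrite subr_gt0.
have a0 : 0 < a by have := lt_le_trans a'0 ha; rewrite pmulr_lgt0.
apply: le_trans (_ : a `^ (- p) * (1 - u) `^ (- p) <= _).
  by rewrite ler_wpM2l ?powR_ge0 ?bernoulli_powRN.
rewrite !powRN -invfM -(powRM _ (ltW a0) (ltW hu)).
have hp : a' `^ p <= (a * (1 - u)) `^ p.
  by rewrite ge0_ler_powR ?nnegrE ?(ltW p0) ?(ltW a'0) ?mulr_ge0 ?(ltW a0) ?(ltW hu).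
by rewrite lef_pV2 // posrE powR_gt0 // mulr_gt0.
Qed.

Lemma le_powRN_inv (y B p : R) : 0 < y -> 0 < B -> 0 < p ->
  B <= y `^ (- p) -> y <= B `^ (- p^-1).
Proof.
move=> y0 B0 p0 hB.
have : B `^ p^-1 <= (y `^ (- p)) `^ p^-1.
  by rewrite ge0_ler_powR ?nnegrE ?invr_ge0 ?powR_ge0 ?(ltW p0) ?(ltW B0).
rewrite -powRrM mulNr mulfV ?gt_eqF // powR_inv1 ?(ltW y0) // powRN => h.
by rewrite -[y]invrK lef_pV2 ?posrE ?invr_gt0 ?powR_gt0.
Qed.

Lemma geometric_bound (a : nat -> R) (u : R) (N : nat) : 0 <= u ->
  (forall k, (k < N)%N -> a k.+1 <= a k * u) ->
  forall k, (k <= N)%N -> a k <= a 0%N * u ^+ k.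
Proof.
move=> u0 hstep; elim=> [|k IH] hk; first by rewrite expr0 mulr1.
apply: le_trans (hstep k hk) _.
by rewrite exprS mulrCA [a k * _]mulrC ler_wpM2l // IH // ltnW.
Qed.

End PowerBounds.

Section Rates.
Variables (R : realType) (b C e r : R) (a : nat -> R).
Hypotheses (hb : 0 < b < 1) (hC : 0 < C) (he : 0 < e) (hr : 0 <= r <= 1)
  (a_ge0 : forall k, 0 <= a k)
  (a_step : forall k, a k.+1 <= a k * (1 - b * Num.min 1 ((C * a k `^ (1 - r)) `^ e))).

Lemma contraction_factor_ge0 z : 0 <= 1 - b * Num.min 1 z.
Proof.
have [b0 b1] := andP hb.
have m1 : Num.min 1 z <= 1 by rewrite ge_min lexx.
by rewrite subr_ge0 (le_trans (ler_wpM2l (ltW b0) m1)) // mulr1 ltW.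
Qed.

Lemma a_nonincreasing i j : (i <= j)%N -> a j <= a i.
Proof.
move/subnKC <-; elim: (j - i)%N => [|d IH]; first by rewrite addn0.
rewrite addnS; apply: le_trans (a_step _) (le_trans _ IH).
rewrite ler_piMr // lerBlDr lerDl mulr_ge0 ?(ltW (proj1 (andP hb))) //.
by rewrite le_min ler01 powR_ge0.
Qed.

Lemma rate_linear : r = 1 ->
  forall k, a k <= a 0%N * (1 - b * Num.min 1 (C `^ e)) ^+ k.
Proof.
move=> r1 k; apply: (@geometric_bound _ _ _ k) => //; first exact: contraction_factor_ge0.
by move=> j _; have := a_step j; rewrite r1 subrr powRr0 mulr1.
Qed.

Lemma rate_before_threshold k0 :
  (forall k, (k < k0)%N -> ~ (a k `^ (1 - r) <= C^-1)) ->
  forall k, (k <= k0)%N -> a k <= a 0%N * (1 - b) ^+ k.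
Proof.
move=> above; apply: geometric_bound; first by rewrite subr_ge0 ltW //; case/andP: hb.
move=> k /above /negP; rewrite -ltNge -(ltr_pM2l hC) mulfV ?gt_eqF // => hk.
have hm : Num.min 1 ((C * a k `^ (1 - r)) `^ e) = 1.
  apply/min_idPl; rewrite -{1}(powRr0 (C * a k `^ (1 - r))).
  by rewrite ler_powR ?(ltW he) ?(ltW hk).
by have := a_step k; rewrite hm mulr1.
Qed.

Section AfterThreshold.
Variable k0 : nat.
Hypotheses (hr1 : r < 1) (below : a k0 `^ (1 - r) <= C^-1).

Let p := (1 - r) * e.
Let g := b * C `^ e.

Lemma p_gt0 : 0 < p.
Proof. by rewrite mulr_gt0 // subr_gt0. Qed.

(* Past the threshold the step size is no longer capped at 1. *)
Lemma step_after_threshold k : (k0 <= k)%N ->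
  a k.+1 <= a k * (1 - g * a k `^ p) /\ g * a k `^ p <= b.
Proof.
move=> hk.
have hCa : 0 <= C * a k `^ (1 - r) by rewrite mulr_ge0 ?powR_ge0 ?(ltW hC).
have small : C * a k `^ (1 - r) <= 1.
  rewrite -[X in _ <= X](mulfV (lt0r_neq0 hC)) ler_pM2l //.
  apply: le_trans (_ : _ <= a k0 `^ (1 - r)) below.
  rewrite ge0_ler_powR ?nnegrE ?subr_ge0 ?a_ge0 ?a_nonincreasing //.
  by case/andP: hr.
have hpow : (C * a k `^ (1 - r)) `^ e = C `^ e * a k `^ p.
  by rewrite powRM ?powR_ge0 ?(ltW hC) // -powRrM.
have hle1 : (C * a k `^ (1 - r)) `^ e <= 1.
  apply: (@le_trans _ _ (1 `^ e)); last by rewrite powR1.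
  by rewrite ge0_ler_powR ?nnegrE ?(ltW he) ?ler01.
have hm : Num.min 1 ((C * a k `^ (1 - r)) `^ e) = C `^ e * a k `^ p.
  by rewrite -hpow; apply/min_idPr.
split; first by have := a_step k; rewrite hm /g mulrA.
by rewrite /g -mulrA -hpow ler_piMr // ltW; case/andP: hb.
Qed.

(* By Bernoulli, each step multiplies [a^(-p)] by at least [1 + p g a^p]. *)
Lemma recip_growth j : 0 < a (k0 + j) ->
  a k0 `^ (- p) + p * g * j%:R <= a (k0 + j) `^ (- p).
Proof.
elim: j => [|j IH] hpos; first by rewrite addn0 mulr0 addr0.
have hpos' : 0 < a (k0 + j).
  by apply: lt_le_trans hpos _; rewrite addnS a_nonincreasing.
have [hstep hub] := step_after_threshold (leq_addr j k0).
have [b0 b1] := andP hb.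
have u01 : 0 <= g * a (k0 + j) `^ p < 1.
  by rewrite !mulr_ge0 ?powR_ge0 ?(ltW b0) //= (le_lt_trans hub).
rewrite addnS in hpos *.
have := powRN_contraction hpos hstep u01 p_gt0.
have -> : a (k0 + j) `^ (- p) * (1 + p * (g * a (k0 + j) `^ p)) =
          a (k0 + j) `^ (- p) + p * g.
  by rewrite powRN; field; rewrite gt_eqF ?powR_gt0.
apply: le_trans.
by rewrite -[j.+1]addn1 natrD mulrDr mulr1 addrA lerD2r IH.
Qed.

Lemma rate_after_threshold k : (k0 <= k)%N ->
  a k <= (a k0 `^ (- p) + p * g * (k - k0)%:R) `^ (- p^-1).
Proof.
move=> hk; have [ak0|akp] := eqVneq (a k) 0; first by rewrite ak0 powR_ge0.
have akpos : 0 < a k by rewrite lt_neqAle eq_sym akp a_ge0.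
have := recip_growth (j := (k - k0)%N); rewrite subnKC // => /(_ akpos) hgrowth.
apply: le_powRN_inv hgrowth => //; last exact: p_gt0.
rewrite ltr_pwDl ?powR_gt0 //.
  by apply: lt_le_trans akpos _; rewrite a_nonincreasing.
have [b0 _] := andP hb.
by rewrite !mulr_ge0 ?powR_ge0 ?ler0n ?subr_ge0 ?(ltW hr1) ?(ltW he) ?(ltW b0).
Qed.

End AfterThreshold.
End Rates.

Section Dot.
Variables (R : realType) (n : nat).
Implicit Types u v w : 'rV[R]_n.

Lemma dotC u v : dot u v = dot v u.
Proof. by apply: eq_bigr => i _; rewrite mulrC. Qed.

Lemma dotDr u v w : dot u (v + w) = dot u v + dot u w.
Proof. by rewrite /dot -big_split; apply: eq_bigr => i _; rewrite mxE mulrDr. Qed.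

Lemma dotZr u v (a : R) : dot u (a *: v) = a * dot u v.
Proof. by rewrite /dot mulr_sumr; apply: eq_bigr => i _; rewrite mxE mulrCA. Qed.

Lemma dotNr u v : dot u (- v) = - dot u v.
Proof. by rewrite -scaleN1r dotZr mulN1r. Qed.

Lemma dotBr u v w : dot u (v - w) = dot u v - dot u w.
Proof. by rewrite dotDr dotNr. Qed.

Lemma dotNl u v : dot (- u) v = - dot u v.
Proof. by rewrite dotC dotNr dotC. Qed.

End Dot.

Section ConvexFun.
Variables (R : realType) (n : nat) (h : 'rV[R]_n -> \bar R).
Hypotheses (hp : proper_fun h) (hc : convex_fun h).

Lemma proper_fin y : (h y < +oo)%E -> h y \is a fin_num.
Proof. by have := proj1 hp y; case: (h y). Qed.

Lemma convex_fun_fin (x y : 'rV[R]_n) (t : R) : 0 <= t <= 1 ->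
  h x \is a fin_num -> h y \is a fin_num ->
  h (t *: x + (1 - t) *: y) \is a fin_num /\
  fine (h (t *: x + (1 - t) *: y)) <= t * fine (h x) + (1 - t) * fine (h y).
Proof.
move=> ht hx hy; have := hc x y ht.
rewrite -(fineK hx) -(fineK hy) -!EFinM -EFinD.
case E: (h _) => [r| |] //= _.
by have := proj1 hp (t *: x + (1 - t) *: y); rewrite E.
Qed.

Lemma has_gradient_fin x g : has_gradient h x g -> h x \is a fin_num.
Proof. by case=> hn _ _; apply: nbhs_singleton hn. Qed.

(* The difference quotients of the convex function [h] along [y - x] lie
   below [h y - h x] and converge to the directional derivative [<g, y - x>]. *)
Lemma gradient_ineq x g y : has_gradient h x g -> (h x + (dot g (y - x))%:E <= h y)%E.
Proof.
move=> hg; have fx := has_gradient_fin hg; case: hg => _ hdiff hd.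
have [fy|nf] := boolP (h y \is a fin_num); last first.
  suff -> : h y = +oo%E by rewrite leey.
  by move: nf (proj1 hp y); case: (h y).
rewrite -(fineK fx) -(fineK fy) -EFinD lee_fin.
set F := fine \o h; set v := y - x.
have hder : (fun t : R => t^-1 *: (F (t *: v + x) - F x)) @ 0^' --> dot g v.
  by rewrite -hd -deriveE //; exact: diff_derivable.
have hr := cvg_dnbhs_at_right hder.
have le : \forall t \near 0^'+, t^-1 *: (F (t *: v + x) - F x) <= fine (h y) - fine (h x).
  apply: filterS2 (nbhs_right_gt 0) (nbhs_right_le (@ltr01 R)) => t t0 t1.
  have -> : t *: v + x = t *: y + (1 - t) *: x.
    by rewrite /v scalerBr scalerBl scale1r addrA addrAC.
  have t01 : 0 <= t <= 1 by rewrite t1 ltW.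
  have [_ hle] := convex_fun_fin t01 fy fx.
  rewrite /F /= [_ *: _]mulrC ler_pdivrMr //; nra.
have := limr_le (cvgP _ hr) le; rewrite (cvg_lim _ hr) //.
by move=> /(_ (at_right_proper_filter 0)); lra.
Qed.

End ConvexFun.

Section ConditionalGradient.
Variables (R : realType) (n : nat) (f Psi : 'rV[R]_n -> \bar R)
  (gradf : 'rV[R]_n -> 'rV[R]_n) (xs : 'rV[R]_n).
Hypotheses (hf : closed_proper_convex f) (hPsi : closed_proper_convex Psi)
  (A1 : forall x, dom Psi x -> has_gradient f x (gradf x))
  (xs_fin : (f xs + Psi xs)%E \is a fin_num)
  (xs_min : forall y, (f xs + Psi xs <= f y + Psi y)%E).

Let fp : proper_fun f. Proof. by case: hf. Qed.
Let fc : convex_fun f. Proof. by case: hf. Qed.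
Let pp : proper_fun Psi. Proof. by case: hPsi. Qed.
Let pc : convex_fun Psi. Proof. by case: hPsi. Qed.

Local Notation fr y := (fine (f y)).
Local Notation pr y := (fine (Psi y)).

(* Real-valued versions of [gap f Psi x (gradf x)] and [Dcal gradf f Psi x s t]
   (Lemmas [gapE] and [DcalE]); [gapR] is the Frank-Wolfe gap. *)
Definition gapR x s := pr x - pr s + dot (gradf x) (x - s).

Definition DcalR x s t :=
  fr (x + t *: (s - x)) + pr (x + t *: (s - x)) - fr x - pr x + t * gapR x s.

Lemma dom_fin_f x : dom Psi x -> f x \is a fin_num.
Proof. by move=> hx; apply: has_gradient_fin (A1 hx). Qed.

Lemma dom_fin_Psi x : dom Psi x -> Psi x \is a fin_num.
Proof. exact: proper_fin. Qed.

Lemma fin_dom y : Psi y \is a fin_num -> dom Psi y.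
Proof. by move=> hy; rewrite /dom /= -(fineK hy) ltry. Qed.

Lemma argmin_lin_fin g s : argmin_lin Psi g s -> Psi s \is a fin_num.
Proof.
move=> hs; have [pn [y0 hy0]] := pp; apply: proper_fin => //.
have := hs y0; rewrite -(fineK hy0) -EFinD.
by move: (pn s); case: (Psi s) => // r _ _; exact: ltry.
Qed.

Lemma segmentE (x s : 'rV[R]_n) t : x + t *: (s - x) = t *: s + (1 - t) *: x.
Proof. by rewrite scalerBr scalerBl scale1r addrCA addrA. Qed.

Lemma segment_fin x s t : dom Psi x -> argmin_lin Psi (gradf x) s -> 0 <= t <= 1 ->
  [/\ dom Psi (x + t *: (s - x)), Psi (x + t *: (s - x)) \is a fin_num
    & f (x + t *: (s - x)) \is a fin_num].
Proof.
move=> hx hs ht; rewrite segmentE.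
have [h1 _] := convex_fun_fin pp pc ht (argmin_lin_fin hs) (dom_fin_Psi hx).
have hd := fin_dom h1.
by split => //; apply: dom_fin_f.
Qed.

Lemma conjugate_gradient x : dom Psi x ->
  conjugate f (gradf x) = (dot (gradf x) x - fr x)%:E.
Proof.
move=> hx; have fx := dom_fin_f hx.
apply/eqP; rewrite eq_le; apply/andP; split.
  apply: ge_ereal_sup => _ [y _ <-].
  have := gradient_ineq fp fc y (A1 hx).
  rewrite -(fineK fx); case: (f y) => [r| |] //=; last by rewrite leNye.
  by rewrite -EFinD -EFinB !lee_fin dotBr; lra.
by apply: ereal_sup_ubound; exists x => //; rewrite -{1}(fineK fx) -EFinB.
Qed.

Lemma conjugate_ge v s : Psi s \is a fin_num ->
  ((dot v s - pr s)%:E <= conjugate Psi v)%E.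
Proof. by move=> hs; apply: ereal_sup_ubound; exists s => //; rewrite -{1}(fineK hs) -EFinB. Qed.

Lemma conjugate_argmin_lin g s : argmin_lin Psi g s ->
  conjugate Psi (- g) = (- dot g s - pr s)%:E.
Proof.
move=> hs; have ps := argmin_lin_fin hs.
apply/eqP; rewrite eq_le; apply/andP; split; last by rewrite -dotNl conjugate_ge.
apply: ge_ereal_sup => _ [y _ <-].
have := hs y; rewrite -(fineK ps); case: (Psi y) => [r| |] //=; last by rewrite leNye.
by rewrite -!EFinD !lee_fin dotNl; lra.
Qed.

Lemma argmin_lin_subdiff x s : argmin_lin Psi (gradf x) s ->
  subdiff (conjugate Psi) (- gradf x) s.
Proof.
move=> hs; rewrite /subdiff (conjugate_argmin_lin hs); split => // v.
apply: le_trans (conjugate_ge v (argmin_lin_fin hs)).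
by rewrite -EFinD lee_fin opprK dotDr [dot s v]dotC [dot s (gradf x)]dotC; lra.
Qed.

Lemma gapE x s : dom Psi x -> argmin_lin Psi (gradf x) s ->
  gap f Psi x (gradf x) = (gapR x s)%:E.
Proof.
move=> hx hs.
rewrite /gap conjugate_gradient // (conjugate_argmin_lin hs).
rewrite -(fineK (dom_fin_f hx)) -(fineK (dom_fin_Psi hx)) -!EFinD.
by congr EFin; rewrite /gapR dotBr /=; ring.
Qed.

Lemma DcalE x s t : dom Psi x -> argmin_lin Psi (gradf x) s -> 0 <= t <= 1 ->
  Dcal gradf f Psi x s t = (DcalR x s t)%:E.
Proof.
move=> hx hs ht; have [_ p1 f1] := segment_fin hx hs ht.
rewrite /Dcal /bregman -(fineK f1) -(fineK p1) -(fineK (dom_fin_f hx)).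
rewrite -(fineK (dom_fin_Psi hx)) -(fineK (argmin_lin_fin hs)) /= -!EFinD.
by congr EFin; rewrite /DcalR /gapR [x + _ - x]addrC addKr dotZr !dotBr; ring.
Qed.

Lemma suboptE y : dom Psi y -> subopt f Psi y = fr y + pr y - (fr xs + pr xs).
Proof.
move=> hy; have [fy py] := (dom_fin_f hy, dom_fin_Psi hy).
rewrite /subopt; have -> : ereal_inf (range (fun y => f y + Psi y)%E) = (f xs + Psi xs)%E.
  apply/eqP; rewrite eq_le; apply/andP; split.
    by apply: ereal_inf_lbound; exists xs.
  by apply/ereal_infP => _ [z _ <-].
move: xs_fin; rewrite fin_numD => /andP[fxs pxs].
by rewrite -(fineK fy) -(fineK py) -(fineK fxs) -(fineK pxs) -!EFinD.
Qed.

Lemma subopt_le_gap x s : dom Psi x -> argmin_lin Psi (gradf x) s ->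
  0 <= subopt f Psi x <= gapR x s.
Proof.
move=> hx hs; have [[fx px] ps] := (dom_fin_f hx, dom_fin_Psi hx, argmin_lin_fin hs).
rewrite suboptE //.
have := xs_min x; have := gradient_ineq fp fc xs (A1 hx); have := hs xs.
move: xs_fin; rewrite fin_numD => /andP[fxs pxs].
rewrite -(fineK fx) -(fineK px) -(fineK fxs) -(fineK pxs) -(fineK ps) -!EFinD !lee_fin.
by rewrite /gapR !dotBr => h1 h2 h3; apply/andP; split; lra.
Qed.

Lemma subopt_segment x s t : dom Psi x -> argmin_lin Psi (gradf x) s -> 0 <= t <= 1 ->
  subopt f Psi (x + t *: (s - x)) = subopt f Psi x - t * gapR x s + DcalR x s t.
Proof.
move=> hx hs ht; have [dt _ _] := segment_fin hx hs ht.
by rewrite !suboptE // /DcalR; ring.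
Qed.

Lemma DcalR0 x s : DcalR x s 0 = 0.
Proof. by rewrite /DcalR scale0r addr0 mul0r addr0; ring. Qed.

Lemma DcalR_star x s t l : dom Psi x -> argmin_lin Psi (gradf x) s ->
  0 <= t <= 1 -> 0 <= l <= 1 -> DcalR x s (l * t) <= l * DcalR x s t.
Proof.
move=> hx hs ht hl; have [_ p1 f1] := segment_fin hx hs ht.
have e : l *: (x + t *: (s - x)) + (1 - l) *: x = x + (l * t) *: (s - x).
  by rewrite -segmentE addrAC subrr add0r scalerA.
have [_ h1] := convex_fun_fin fp fc hl f1 (dom_fin_f hx).
have [_ h2] := convex_fun_fin pp pc hl p1 (dom_fin_Psi hx).
rewrite e in h1 h2; rewrite /DcalR; nra.
Qed.

(* [f] is continuous along the segment and [Psi] is lower semicontinuous, so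
   the sublevel inequality passes to the limit from the left. *)
Lemma DcalR_left_closed x s K T : dom Psi x -> argmin_lin Psi (gradf x) s ->
  0 < T <= 1 -> (forall t, 0 <= t < T -> DcalR x s t <= K * t) ->
  DcalR x s T <= K * T.
Proof.
move=> hx hs /andP[T0 T1] H.
pose p t : 'rV[R]_n := x + t *: (s - x).
pose B t := fr x + pr x + t * (K - gapR x s) - fr (p t).
have hT : 0 <= T <= 1 by rewrite ltW.
have [dT pT _] := segment_fin hx hs hT.
suff : pr (p T) <= B T by rewrite /DcalR /B; lra.
apply/ler_addgt0Pr => e e0.
have pcv : p t @[t --> T] --> p T.
  by apply: cvgD; [exact: cvg_cst | apply: cvgZ; [exact: cvg_id | exact: cvg_cst]].
have [_ hd _] := A1 dT.
have Bc : B t @[t --> T] --> B T.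
  apply: cvgB; last exact: (cvg_comp _ _ pcv (differentiable_continuous hd)).
  by apply: cvgD; [exact: cvg_cst | apply: cvgM; [exact: cvg_id | exact: cvg_cst]].
have BS : \forall t \near T, B t < B T + e by apply: (cvgr_lt _ Bc); rewrite ltrDl.
set S := [set y | (Psi y <= (B T + e)%:E)%E].
have cS : closed S by case: hPsi => + _ _; apply.
suff : S (p T) by rewrite /S /= -(fineK pT) lee_fin.
rewrite ((closure_id _).1 cS) => U hU.
have hU' : \forall t \near T, U (p t) := pcv _ hU.
have : \forall t \near T^'-, (S `&` U) (p t).
  near=> t.
  have t0 : 0 <= t by near: t; exact: nbhs_left_ge.
  have tT : t < T by near: t; exact: nbhs_left_lt.
  have Ut : U (p t) by near: t; exact: cvg_within hU'.
  have Bt : B t < B T + e by near: t; exact: cvg_within BS.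
  have t01 : 0 <= t <= 1 by rewrite t0 (ltW (lt_le_trans tT T1)).
  have [_ pt _] := segment_fin hx hs t01.
  have tT' : 0 <= t < T by rewrite t0 tT.
  split => //; have := H t tT'.
  by rewrite /S /= -(fineK pt) lee_fin; move: Bt; rewrite /DcalR /B; lra.
by move=> hn; have [t ht] := filter_ex hn; exists (p t).
Unshelve. all: end_near.
Qed.

Lemma theta_hatE c x s : dom Psi x -> argmin_lin Psi (gradf x) s ->
  theta_hat gradf f Psi c x s = sup (feasible (DcalR x s) ((1 - c) * gapR x s)).
Proof.
move=> hx hs; congr sup; apply/seteqP; split => t [ht H]; split => //; move: H;
  rewrite (DcalE hx hs ht) (gapE hx hs) -!EFinM -!EFinD lee_fin; lra.
Qed.

Lemma weak_growthR q r M x s t : weak_growth gradf f Psi q r M ->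
  dom Psi x -> argmin_lin Psi (gradf x) s -> 0 <= t <= 1 ->
  DcalR x s t * subopt f Psi x `^ (1 - r) <= M * t `^ q / q * gapR x s.
Proof.
move=> hwg hx hs ht; have := hwg x hx s (argmin_lin_subdiff hs) t ht.
by rewrite (DcalE hx hs ht) (gapE hx hs) -!EFinM lee_fin.
Qed.

Lemma conditional_gradient_step c rho q r M x s th :
  0 < c < 1 -> 0 < rho < 1 -> 1 < q -> 0 < M -> weak_growth gradf f Psi q r M ->
  dom Psi x -> argmin_lin Psi (gradf x) s -> 0 <= th <= 1 ->
  rho * theta_hat gradf f Psi c x s <= th <= theta_hat gradf f Psi c x s ->
  subopt f Psi (x + th *: (s - x)) <=
    subopt f Psi x * (1 - (c + rho - 1) * step_size c q r M (subopt f Psi x)).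
Proof.
move=> hc hrho hq hM hwg hx hs hth; rewrite theta_hatE // subopt_segment //.
apply: descent_step => //.
- exact: DcalR0.
- by move=> t l ht hl; apply: DcalR_star.
- by move=> T hT H; apply: DcalR_left_closed.
- by move=> t ht; apply: weak_growthR.
- exact: subopt_le_gap.
Qed.

End ConditionalGradient.

Theorem theorem4 (R : realType) (n : nat)
  (f Psi : 'rV[R]_n -> \bar R) (gradf : 'rV[R]_n -> 'rV[R]_n)
  (hf : closed_proper_convex f) (hPsi : closed_proper_convex Psi)
  (A1 : forall x, dom Psi x -> has_gradient f x (gradf x))
  (A2 : forall x, dom Psi x -> argmin_lin Psi (gradf x) !=set0)
  (hmin : exists xs : 'rV[R]_n, (f xs + Psi xs)%E \is a fin_num /\
            forall y, (f xs + Psi xs <= f y + Psi y)%E)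
  (c rho : R) (hc : 0 < c < 1) (hrho : 0 < rho < 1) (hcrho : 1 < c + rho)
  (x s : nat -> 'rV[R]_n) (theta : nat -> R)
  (hx0 : dom Psi (x 0%N))
  (hs : forall k, argmin_lin Psi (gradf (x k)) (s k))
  (htheta : forall k, 0 <= theta k <= 1 /\
     rho * theta_hat gradf f Psi c (x k) (s k) <= theta k
       <= theta_hat gradf f Psi c (x k) (s k))
  (hx : forall k, x k.+1 = (1 - theta k) *: x k + theta k *: s k)
  (q r M : R) (hq : 1 < q) (hr : 0 <= r <= 1) (hM : 0 < M)
  (hwg : weak_growth gradf f Psi q r M) :
  (forall k : nat,
     subopt f Psi (x k.+1) <= subopt f Psi (x k) *
       (1 - (c + rho - 1) *
          Num.min 1 ((q * (1 - c) / M * subopt f Psi (x k) `^ (1 - r)) `^ (1 / (q - 1)))))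
  /\
  (r = 1 -> forall k : nat,
     subopt f Psi (x k) <= subopt f Psi (x 0%N) *
       (1 - (c + rho - 1) * Num.min 1 ((q * (1 - c) / M) `^ (1 / (q - 1)))) ^+ k)
  /\
  (r < 1 -> forall k0 : nat,
     subopt f Psi (x k0) `^ (1 - r) <= M / (q * (1 - c)) ->
     (forall k : nat, (k < k0)%N -> ~ (subopt f Psi (x k) `^ (1 - r) <= M / (q * (1 - c)))) ->
     (forall k : nat, (k <= k0)%N ->
        subopt f Psi (x k) <= subopt f Psi (x 0%N) * (1 - (c + rho - 1)) ^+ k)
     /\
     (forall k : nat, (k0 <= k)%N ->
        subopt f Psi (x k) <=
          (subopt f Psi (x k0) `^ ((r - 1) / (q - 1))
           + (1 - r) * (c + rho - 1) / (q - 1) * (q * (1 - c) / M) `^ (1 / (q - 1))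
             * (k - k0)%:R) `^ ((q - 1) / (r - 1)))).
Proof.
have [xs [xs_fin xs_min]] := hmin.
have hxk k : x k.+1 = x k + theta k *: (s k - x k) by rewrite hx segmentE addrC.
have hth k : 0 <= theta k <= 1 by case: (htheta k).
have hdom k : dom Psi (x k).
  by elim: k => // k IH; rewrite hxk; have [] := segment_fin hPsi A1 IH (hs k) (hth k).
have hstep k : subopt f Psi (x k.+1) <=
    subopt f Psi (x k) * (1 - (c + rho - 1) * step_size c q r M (subopt f Psi (x k))).
  rewrite hxk; apply: (conditional_gradient_step hf hPsi A1 xs_fin xs_min hc hrho hq hM hwg
    (hdom k) (hs k) (hth k)).
  by case: (htheta k).
have ha0 k : 0 <= subopt f Psi (x k).
  by have /andP[] := subopt_le_gap hf hPsi A1 xs_fin xs_min (hdom k) (hs k).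
have hb : 0 < c + rho - 1 < 1 by apply/andP; split; lra.
have hC : 0 < q * (1 - c) / M by rewrite !mulr_gt0 ?invr_gt0 ?subr_gt0 //; lra.
have he : 0 < 1 / (q - 1) by rewrite divr_gt0 ?subr_gt0.
split; first exact: hstep.
split; first exact: rate_linear.
move=> hr1 k0 below above; rewrite -invf_div in below above; split.
  exact: (rate_before_threshold hb hC he hstep above).
move=> k hk; apply: le_trans (rate_after_threshold hb hC he hr ha0 hstep hr1 below hk) _.
have -> : (r - 1) / (q - 1) = - ((1 - r) * (1 / (q - 1))) by ring.
have -> : (1 - r) * (c + rho - 1) / (q - 1) * (q * (1 - c) / M) `^ (1 / (q - 1)) =
  (1 - r) * (1 / (q - 1)) * ((c + rho - 1) * (q * (1 - c) / M) `^ (1 / (q - 1))) by ring.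
suff -> : (q - 1) / (r - 1) = - ((1 - r) * (1 / (q - 1)))^-1 by [].
by field; rewrite !subr_eq0 (gt_eqF hq) (lt_eqF hr1) (gt_eqF hr1).
Qed.
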